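(* In the multiple-choice setting of the context, suppose there exist a measurable $g:\mathsf Z\to\mathbb R_+$ and $m,d\in\mathbb R_+$ with $\beta m<1$ such that for all $z$ and $i,j=1,\dots,N$: $\int|r_i(z')|P_j(z,dz')\le g(z)$ and $\int g(z')P_i(z,dz')\le mg(z)+d$. Choose $m',d'>0$ with $Nm'+m>1$, $\beta(Nm'+m)<1$ and $d'\ge d/(Nm'+m-1)$, and let $k(z)=m'\sum_{i=1}^N|r_i(z)|+g(z)+d'$. Then: (1) the operator $Q(\psi_1,\dots,\psi_N)=\big(r_i+\beta P_i(\psi_1\vee\dots\vee\psi_N)\big)_{i=1}^N$ is a contraction mapping on $(\times_{i=1}^Nb_k\mathsf Z,\rho_k)$ of modulus $\beta(Nm'+m)$; (2) the unique fixed point of $Q$ in $\times_{i=1}^Nb_k\mathsf Z$ is $\psi^*=(\psi_1^*,\dots,\psi_N^* )$.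
   Context: $(\mathsf Z,\mathscr Z)$ is a measurable space; $P_1,\dots,P_N$ are stochastic kernels on it and $P_ih(z)=\int h(z')P_i(z,dz')$; $r_1,\dots,r_N:\mathsf Z\to\mathbb R$ are measurable; $\beta\in(0,1)$. Each period the agent observes $Z_t$ and chooses an alternative $i\in\{1,\dots,N\}$, receiving $r_i(Z_t)$, after which $Z_{t+1}\sim P_i(Z_t,\cdot)$. $v^*(z)$ is the maximal expected discounted sum of payoffs starting from $z$, and $\psi_i^*(z)=r_i(z)+\beta\int v^*(z')P_i(z,dz')$ is the expected value of choosing alternative $i$. $b_k\mathsf Z$ = measurable $f$ with $\|f\|_k=\sup|f|/k<\infty$; $\rho_k(\psi,\tilde\psi)=\max_i\|\psi_i-\tilde\psi_i\|_k$. *)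

From HB Require Import structures.
From mathcomp Require Import all_boot all_order all_algebra.
From mathcomp Require Import all_classical all_reals all_analysis.
Set Implicit Arguments. Unset Strict Implicit. Unset Printing Implicit Defensive.
Import Order.TTheory GRing.Theory Num.Theory numFieldNormedType.Exports.
Local Open Scope classical_set_scope.
Local Open Scope ring_scope.

Section Defs.
Context {d : measure_display} {T : measurableType d} {R : realType} {N : nat}.

Definition Pint (P : R.-pker T ~> T) (h : T -> R) (z : T) : R :=
  fine (\int[P z]_y (h y)%:E)%E.

(* psi_1 v ... v psi_N  (pointwise max; N > 0 assumed where used) *)
Definition vmax (psi : 'I_N -> T -> R) (z : T) : R :=
  fine (\big[Order.max/-oo%E]_(i < N) (psi i z)%:E).

Definition Qop (r : 'I_N -> T -> R) (beta : R) (P : 'I_N -> R.-pker T ~> T)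
  (psi : 'I_N -> T -> R) : 'I_N -> T -> R :=
  fun i z => r i z + beta * Pint (P i) (vmax psi) z.

Definition knorm (k f : T -> R) : R := sup [set `|f z| / k z | z in setT].

Definition bk (k : T -> R) (f : T -> R) : Prop :=
  measurable_fun setT f /\ exists C : R, forall z, `|f z| / k z <= C.

Definition prod_bk (k : T -> R) (psi : 'I_N -> T -> R) : Prop :=
  forall i, bk k (psi i).

Definition rho_k (k : T -> R) (psi psi' : 'I_N -> T -> R) : R :=
  \big[Num.max/0]_(i < N) knorm k (psi i \- psi' i).

Definition contraction_on {X : Type} (S : X -> Prop) (F : X -> X)
  (rho : X -> X -> R) (lam : R) : Prop :=
  0 <= lam < 1 /\ (forall x, S x -> S (F x)) /\
  (forall x y, S x -> S y -> rho (F x) (F y) <= lam * rho x y).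

(* Markov (possibly nonstationary) deterministic policies *)
Definition policy (sigma : nat -> T -> 'I_N) : Prop :=
  forall t i, measurable (sigma t @^-1` [set i]).

(* expected payoff at time t: E_z r_{sigma_t(Z_t)}(Z_t) *)
Fixpoint expay (r : 'I_N -> T -> R) (P : 'I_N -> R.-pker T ~> T)
  (sigma : nat -> T -> 'I_N) (t : nat) : T -> R :=
  match t with
  | 0%N => fun z => r (sigma 0%N z) z
  | t'.+1 => fun z => Pint (P (sigma 0%N z)) (expay r P (fun s => sigma s.+1) t') z
  end.

Definition vpol (r : 'I_N -> T -> R) (beta : R) (P : 'I_N -> R.-pker T ~> T)
  (sigma : nat -> T -> 'I_N) (z : T) : R :=
  limn (series (fun t => beta ^+ t * expay r P sigma t z)).

Definition vstar (r : 'I_N -> T -> R) (beta : R) (P : 'I_N -> R.-pker T ~> T)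
  (z : T) : \bar R :=
  ereal_sup [set (vpol r beta P sigma z)%:E | sigma in policy].

Definition psistar (r : 'I_N -> T -> R) (beta : R) (P : 'I_N -> R.-pker T ~> T)
  : 'I_N -> T -> R :=
  fun i z => r i z + beta * Pint (P i) (fun z' => fine (vstar r beta P z')) z.

End Defs.

(* The weight k satisfies the drift inequality P_i k <= lam k with lam = N m' + m, so
   every P_i maps b_k Z into itself with norm at most lam; as the pointwise maximum is
   1-Lipschitz, Q is a (beta lam)-contraction for rho_k, and its fixed point psi is the
   pointwise limit of the iterates Q^n 0.  To identify psi with psi*, let w be the
   maximum of the psi_i.  Unrolling the equation psi = Q psi n times shows that the
   n-step payoff of every policy is at most w + C (beta lam)^n k, and at least
   w - C (beta lam)^n k for the policy that always picks a maximising alternative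
   (chosen measurably as the least such index).  Hence v* = w, so psi* = Q psi = psi. *)

From HB Require Import structures.
From mathcomp Require Import all_boot all_order all_algebra.
From mathcomp Require Import all_classical all_reals all_analysis.
From mathcomp Require Import measurable_realfun ring lra.
Import Order.TTheory GRing.Theory Num.Theory numFieldNormedType.Exports.
Local Open Scope classical_set_scope.
Local Open Scope ring_scope.
Set Implicit Arguments. Unset Strict Implicit. Unset Printing Implicit Defensive.

Lemma le0_geometric_bound (R : realType) (a c L : R) : 0 <= L < 1 ->
  (forall n, a <= c * L ^+ n) -> a <= 0.
Proof.
move=> /andP[L0 L1] aleL.
have cL0 : (fun n => c * L ^+ n) @ \oo --> 0.
  by rewrite -(mulr0 c); apply: cvgMl_tmp; apply: cvg_expr; rewrite ger0_norm.
by rewrite -(cvg_lim _ cL0) //; apply: limr_ge; [exact: cvgP cL0|exact: nearW].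
Qed.

Section geometric_cauchy.
Context (R : realType) (u : R ^nat) (a L : R).
Hypotheses (L_ge0 : 0 <= L) (L_lt1 : L < 1).
Hypothesis u_step : forall n, `|u n.+1 - u n| <= a * L ^+ n.

Let a_ge0 : 0 <= a.
Proof. by have := u_step 0; rewrite expr0 mulr1; apply: le_trans. Qed.

Lemma geometric_cauchy_dist n p : (n <= p)%N ->
  `|u p - u n| <= a * L ^+ n / (1 - L).
Proof.
move=> /subnKC <-.
rewrite -telescope_sumr ?leq_addr //.
apply: le_trans (ler_norm_sum _ _ _) _.
apply: le_trans (ler_sum _ (fun t _ => u_step t)) _.
rewrite -mulr_sumr geometric_partial_tail geometric_seriesE ?lt_eqF //= -!mulrA.
apply: ler_wpM2l => //; rewrite mulrA; apply: ler_wpM2r; first by rewrite invr_ge0 subr_ge0 ltW.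
by rewrite ler_piMr ?exprn_ge0 // gerBl exprn_ge0.
Qed.

Lemma geometric_cauchy_cvg : cvgn u.
Proof.
have -> : u = (fun n => u 0%N + series (fun t => u t.+1 - u t) n).
  by apply: funext => n; rewrite /series /= telescope_sumr // addrC subrK.
apply: is_cvgD; first exact: is_cvg_cst.
apply/normed_cvg/(series_le_cvg _ _ u_step) => [n|n|]; first exact: normr_ge0.
  by rewrite mulr_ge0 ?exprn_ge0.
by apply: is_cvg_geometric_series; rewrite ger0_norm.
Qed.

Lemma geometric_cauchy_lim n : `|limn u - u n| <= a * L ^+ n / (1 - L).
Proof.
set B := a * L ^+ n / (1 - L).
have dist p : (n <= p)%N -> u n - B <= u p <= u n + B.
  by move=> /geometric_cauchy_dist /ler_normlP[]; rewrite -/B => *; apply/andP; split; lra.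
have lo : u n - B <= limn u.
  by apply: limr_ge geometric_cauchy_cvg _; exists n => // p /dist /andP[].
have hi : limn u <= u n + B.
  by apply: limr_le geometric_cauchy_cvg _; exists n => // p /dist /andP[].
by apply/ler_normlP; split; lra.
Qed.

End geometric_cauchy.

Section weighted_sup_norm.
Context d (T : measurableType d) (R : realType) (k : T -> R).
Hypothesis k_gt0 : forall z, 0 < k z.
Implicit Types (f h : T -> R) (c : R).

Lemma bk_le f c : measurable_fun setT f -> (forall z, `|f z| <= c * k z) -> bk k f.
Proof. by move=> mf fc; split => //; exists c => z; rewrite ler_pdivrMr. Qed.

Lemma bk_normr_le f : bk k f -> forall z, `|f z| <= knorm k f * k z.
Proof.
move=> [_ [C fC]] z; rewrite -ler_pdivrMr //; apply: ub_le_sup; last by exists z.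
by exists C => _ [y _ <-].
Qed.

Lemma knorm_ge0 f : bk k f -> 0 <= knorm k f.
Proof.
move=> [_ [C fC]]; rewrite /knorm.
have [->|/set0P[x [z _ _]]] := eqVneq [set `|f z| / k z | z in setT] set0.
  by rewrite sup0.
apply: le_trans (divr_ge0 (normr_ge0 (f z)) (ltW (k_gt0 z))) _.
by apply: ub_le_sup; [exists C => _ [y _ <-]|exists z].
Qed.

Lemma knorm_le f c : 0 <= c -> (forall z, `|f z| <= c * k z) -> knorm k f <= c.
Proof.
move=> c0 fc; rewrite /knorm.
have [->|ne] := eqVneq [set `|f z| / k z | z in setT] set0; first by rewrite sup0.
by apply: ge_sup; [exact/set0P|move=> _ [z _ <-]; rewrite ler_pdivrMr].
Qed.

Lemma bkD f h : bk k f -> bk k h -> bk k (f \+ h).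
Proof.
move=> bf bh; apply: (@bk_le _ (knorm k f + knorm k h)).
  by apply: measurable_funD; [case: bf|case: bh].
move=> z; rewrite mulrDl; apply: le_trans (ler_normD _ _) _.
by apply: lerD; exact: bk_normr_le.
Qed.

Lemma bkZ c f : bk k f -> bk k (fun z => c * f z).
Proof.
move=> bf; apply: (@bk_le _ (`|c| * knorm k f)).
  by apply: measurable_funM; [exact: measurable_cst|case: bf].
by move=> z; rewrite normrM -mulrA ler_wpM2l // bk_normr_le.
Qed.

Lemma bkB f h : bk k f -> bk k h -> bk k (f \- h).
Proof.
move=> bf bh; have := bkD bf (bkZ (-1) bh).
by congr bk; apply: funext => z; rewrite /= mulN1r.
Qed.

Lemma bk_cst0 : bk k (cst 0).
Proof. by apply: (@bk_le _ 0) => [|z]; [exact: measurable_cst|rewrite normr0 mul0r]. Qed.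

Lemma bk_sum (I : Type) (s : seq I) (f : I -> T -> R) : (forall t, bk k (f t)) ->
  bk k (fun z => \sum_(t <- s) f t z).
Proof.
move=> bf; elim: s => [|t s IH].
  by under eq_fun do rewrite big_nil; exact: bk_cst0.
by under eq_fun do rewrite big_cons; exact: bkD.
Qed.

Context (N : nat).
Implicit Types (psi phi : 'I_N -> T -> R).

Lemma rho_k_ge0 psi phi : 0 <= rho_k k psi phi.
Proof. exact: bigmax_ge_id. Qed.

Lemma rho_k_normr_le psi phi i z : prod_bk k psi -> prod_bk k phi ->
  `|psi i z - phi i z| <= rho_k k psi phi * k z.
Proof.
move=> bpsi bphi; apply: le_trans (bk_normr_le (bkB (bpsi i) (bphi i)) z) _.
by apply: ler_wpM2r; [exact: ltW|exact: le_bigmax].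
Qed.

Lemma rho_k_le psi phi c : 0 <= c ->
  (forall i z, `|psi i z - phi i z| <= c * k z) -> rho_k k psi phi <= c.
Proof. by move=> c0 h; apply: bigmax_le => // i _; apply: knorm_le => // z; exact: h. Qed.

End weighted_sup_norm.

Section kernel_integral.
Context d (T : measurableType d) (R : realType) (Q : R.-pker T ~> T).
Context (k : T -> R) (lam : R).
Hypotheses (k_gt0 : forall z, 0 < k z) (mk : measurable_fun setT k).
Hypothesis drift : forall z, (\int[Q z]_y (k y)%:E <= (lam * k z)%:E)%E.
Implicit Types (f h : T -> R) (c : R) (z : T).

Let bk_k : bk k k.
Proof. by apply: (bk_le k_gt0 (c := 1)) => // z; rewrite mul1r ger0_norm // ltW. Qed.

Lemma integral_normr_le_weight f c z : 0 <= c -> measurable_fun setT f ->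
  (forall y, `|f y| <= c * k y) -> (\int[Q z]_y (`|f y|)%:E <= (c * (lam * k z))%:E)%E.
Proof.
move=> c0 mf fc; apply: (@le_trans _ _ (\int[Q z]_y (c * k y)%:E)%E).
  apply: ge0_le_integral => //.
  - exact/measurable_EFinP/(measurableT_comp (@normr_measurable R setT) mf).
  - exact/measurable_EFinP/measurable_funM.
  - by move=> y _; rewrite lee_fin.
under eq_integral do rewrite EFinM.
rewrite ge0_integralZl_EFin //.
- by rewrite EFinM lee_wpmul2l ?lee_fin.
- by move=> y _; rewrite lee_fin; exact: ltW.
- exact/measurable_EFinP.
Qed.

Lemma bk_integrable f z : bk k f -> (Q z).-integrable setT (EFin \o f).
Proof.
move=> bf; have mf : measurable_fun setT f by case: bf.
apply/integrableP; split; first exact/measurable_EFinP.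
apply: le_lt_trans (ltry (knorm k f * (lam * k z))).
exact: integral_normr_le_weight (knorm_ge0 k_gt0 bf) mf (bk_normr_le k_gt0 bf).
Qed.

Lemma Pint_EFin f z : bk k f -> (\int[Q z]_y (f y)%:E)%E = (Pint Q f z)%:E.
Proof.
by move=> bf; rewrite /Pint fineK // (integrable_fin_num measurableT (bk_integrable z bf)).
Qed.

Lemma PintB f h z : bk k f -> bk k h -> Pint Q (f \- h) z = Pint Q f z - Pint Q h z.
Proof.
move=> bf bh; apply: EFin_inj; rewrite -Pint_EFin; last exact: bkB.
rewrite EFinB -!Pint_EFin //.
by rewrite -integralB_EFin //; apply: bk_integrable.
Qed.

Lemma PintZ c f z : bk k f -> Pint Q (fun y => c * f y) z = c * Pint Q f z.
Proof.
move=> bf; apply: EFin_inj; rewrite -Pint_EFin; last exact: bkZ.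
rewrite EFinM -Pint_EFin //.
under eq_integral do rewrite EFinM.
by rewrite integralZl //; exact: bk_integrable.
Qed.

Lemma Pint_sum (I : Type) (s : seq I) (f : I -> T -> R) z :
  (forall t, bk k (f t)) ->
  Pint Q (fun y => \sum_(t <- s) f t y) z = \sum_(t <- s) Pint Q (f t) z.
Proof.
move=> bf; apply: EFin_inj; rewrite -Pint_EFin; last exact: bk_sum.
rewrite -sumEFin.
under eq_integral do rewrite -sumEFin.
rewrite integral_sum //; last by move=> t; exact: bk_integrable.
by apply: eq_bigr => t _; rewrite Pint_EFin.
Qed.

Lemma Pint_le_weight f c z : bk k f -> 0 <= c ->
  (forall y, f y <= c * k y) -> Pint Q f z <= c * (lam * k z).
Proof.
move=> bf c0 fc; rewrite -lee_fin -Pint_EFin //.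
apply: (@le_trans _ _ (\int[Q z]_y (c * k y)%:E)%E).
  apply: le_integral => //; [exact: bk_integrable|exact: bk_integrable (bkZ k_gt0 c bk_k)|].
  by move=> y _; rewrite lee_fin.
under eq_integral do rewrite EFinM.
rewrite integralZl //; last exact: bk_integrable.
by rewrite EFinM lee_wpmul2l ?lee_fin.
Qed.

Lemma Pint_le_shift f h c z : bk k f -> bk k h -> 0 <= c ->
  (forall y, f y <= h y + c * k y) -> Pint Q f z <= Pint Q h z + c * (lam * k z).
Proof.
move=> bf bh c0 fh; rewrite -lerBlDl -PintB //.
apply: Pint_le_weight => //; first exact: bkB.
by move=> y /=; rewrite lerBlDl; exact: fh.
Qed.

Lemma Pint_dist_le f h c z : bk k f -> bk k h -> 0 <= c ->
  (forall y, `|f y - h y| <= c * k y) -> `|Pint Q f z - Pint Q h z| <= c * (lam * k z).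
Proof.
move=> bf bh c0 fh; apply/ler_normlP; split; rewrite ?opprB lerBlDl.
- by apply: Pint_le_shift => // y; have /ler_normlP[+ _] := fh y; rewrite opprB lerBlDl.
- by apply: Pint_le_shift => // y; have /ler_normlP[_] := fh y; rewrite lerBlDl.
Qed.

Lemma measurable_Pint f : bk k f -> measurable_fun setT (Pint Q f).
Proof.
move=> bf; have mf : measurable_fun setT (EFin \o f) by apply/measurable_EFinP; case: bf.
have mpos : measurable_fun setT (fun z => \int[Q z]_y ((EFin \o f)^\+ y))%E.
  apply: (measurable_fun_integral_kernel (l := Q)) => //; first exact: measurable_kernel.
  exact: measurable_funepos.
have mneg : measurable_fun setT (fun z => \int[Q z]_y ((EFin \o f)^\- y))%E.
  apply: (measurable_fun_integral_kernel (l := Q)) => //; first exact: measurable_kernel.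
  exact: measurable_funeneg.
have mfine := @fine_measurable R setT measurableT.
apply: eq_measurable_fun
  (measurable_funB (measurableT_comp mfine mpos) (measurableT_comp mfine mneg)).
move=> z _; have fint := bk_integrable z bf.
have pos_fin : (\int[Q z]_y ((EFin \o f)^\+ y))%E \is a fin_num.
  by rewrite ge0_fin_numE ?integral_ge0 //; exact: integral_funepos_lt_pinfty fint.
have neg_fin : (\int[Q z]_y ((EFin \o f)^\- y))%E \is a fin_num.
  by rewrite ge0_fin_numE ?integral_ge0 //; exact: integral_funeneg_lt_pinfty fint.
by rewrite /Pint [in RHS]integralE /= -(fineB pos_fin neg_fin).
Qed.

Lemma Pint_normr_le f c z : bk k f -> 0 <= c ->
  (forall y, `|f y| <= c * k y) -> `|Pint Q f z| <= c * (lam * k z).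
Proof.
move=> bf c0 fc; have P0 : Pint Q (cst 0) z = 0 by rewrite /Pint integral0.
rewrite -[Pint Q f z]subr0 -P0; apply: Pint_dist_le => // [|y]; first exact: bk_cst0.
by rewrite subr0.
Qed.

Lemma bk_Pint f : bk k f -> bk k (Pint Q f).
Proof.
move=> bf; apply: (bk_le k_gt0 (c := knorm k f * lam)); first exact: measurable_Pint.
move=> z; rewrite -mulrA; apply: Pint_normr_le (knorm_ge0 k_gt0 bf) _ => //.
exact: bk_normr_le.
Qed.

End kernel_integral.

Section pointwise_max.
Context d (T : measurableType d) (R : realType) (N : nat).
Hypothesis N_gt0 : (0 < N)%N.
Implicit Types psi phi : 'I_N -> T -> R.

Let vmax_big psi z :
  {i | \big[Order.max/-oo%E]_(j < N) (psi j z)%:E = (psi i z)%:E}.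
Proof.
have [|i _ e] := @eq_bigmax _ _ _ (-oo)%E (Ordinal N_gt0) xpredT (fun j => (psi j z)%:E) isT.
  by move=> *; exact: leNye.
by exists i.
Qed.

Lemma vmax_attained psi z : exists i, vmax psi z = psi i z.
Proof. by have [i e] := vmax_big psi z; exists i; rewrite /vmax e. Qed.

Lemma vmax_ge psi z i : psi i z <= vmax psi z.
Proof.
have [j e] := vmax_big psi z; rewrite /vmax e /= -lee_fin -e.
exact: le_bigmax.
Qed.

Lemma measurable_vmax psi : (forall i, measurable_fun setT (psi i)) ->
  measurable_fun setT (vmax psi).
Proof.
move=> mpsi; apply: measurableT_comp (fine_measurable measurableT) _.
suff ms (s : seq 'I_N) :
    measurable_fun setT (fun z => \big[Order.max/-oo%E]_(i <- s) (psi i z)%:E).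
  exact: ms.
elim: s => [|i s IH]; first by under eq_fun do rewrite big_nil; exact: measurable_cst.
under eq_fun do rewrite big_cons.
by apply: measurable_maxe => //; exact/measurable_EFinP.
Qed.

Lemma vmax_dist_le psi phi z c : (forall i, `|psi i z - phi i z| <= c) ->
  `|vmax psi z - vmax phi z| <= c.
Proof.
move=> h; have [i ei] := vmax_attained psi z; have [j ej] := vmax_attained phi z.
have := vmax_ge phi z i; have := vmax_ge psi z j.
have /ler_normlP[hi1 hi2] := h i; have /ler_normlP[hj1 hj2] := h j.
by rewrite ei ej => ? ?; apply/ler_normlP; split; lra.
Qed.

Lemma bk_vmax (k : T -> R) psi : (forall z, 0 < k z) -> prod_bk k psi -> bk k (vmax psi).
Proof.
move=> k_gt0 bpsi; have b0 : prod_bk k (fun _ : 'I_N => cst 0) by move=> ?; exact: bk_cst0.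
apply: (bk_le k_gt0 (c := rho_k k psi (fun _ : 'I_N => cst 0))).
  by apply: measurable_vmax => i; case: (bpsi i).
move=> z; have [i ->] := vmax_attained psi z.
by have := rho_k_normr_le k_gt0 i z bpsi b0; rewrite /= subr0.
Qed.

End pointwise_max.

Section measurable_selection.
Context d (T : measurableType d) (R : realType) (N : nat).

Lemma measurable_select (s : T -> 'I_N) (F : 'I_N -> T -> R) :
  (forall i, measurable (s @^-1` [set i])) -> (forall i, measurable_fun setT (F i)) ->
  measurable_fun setT (fun z => F (s z) z).
Proof.
move=> ms mF.
apply: (eq_measurable_fun (fun z => \sum_(i < N) (\1_(s @^-1` [set i]) z : R) * F i z)).
  move=> z _; rewrite (bigD1 (s z)) //= big1 ?addr0; first by rewrite indicE mem_set // mul1r.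
  by move=> j /negPf sj; rewrite indicE memNset ?mul0r //= => js; rewrite js eqxx in sj.
by apply: measurable_sum => i; apply: measurable_funM => //; exact: measurable_indic.
Qed.

Lemma exists_measurable_selection (A : 'I_N -> set T) :
  (forall i, measurable (A i)) -> (forall z, exists i, A i z) ->
  exists s : T -> 'I_N, (forall i, measurable (s @^-1` [set i])) /\ forall z, A (s z) z.
Proof.
move=> mA cover.
pose s z := [arg min_(i < sval (cid (cover z)) | z \in A i) (i : nat)].
have sP z : z \in A (s z) /\ forall j, z \in A j -> (s z <= j)%N.
  rewrite /s; case: arg_minnP => [|i Ai imin]; last by [].
  exact/mem_set/(svalP (cid (cover z))).
exists s; split; last by move=> z; have [/set_mem] := sP z.
move=> i; have -> : s @^-1` [set i] = A i `&` \bigcap_(j in [set j : 'I_N | (j < i)%N]) ~` A j.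
  apply/seteqP; split => z /=.
  - move=> <-; have [/set_mem Asz smin] := sP z; split => // j /= ji Aj.
    by have := smin j (mem_set Aj); rewrite leqNgt ji.
  - move=> [Ai notA]; have [/set_mem Asz smin] := sP z.
    apply/val_inj/eqP; rewrite eqn_leq smin ?mem_set //= leqNgt; apply/negP => si.
    exact: notA si Asz.
apply: measurableI => //; apply: fin_bigcap_measurable; first exact: finite_finset.
by move=> j _; exact: measurableC.
Qed.

End measurable_selection.

Section contraction_fixpoint.
Context d (T : measurableType d) (R : realType) (N : nat) (k : T -> R).
Context (F : ('I_N -> T -> R) -> 'I_N -> T -> R) (L : R).
Hypothesis k_gt0 : forall z, 0 < k z.
Hypothesis F_contraction : contraction_on (prod_bk k) F (rho_k k) L.

Let L_ge0 : 0 <= L. Proof. by case: F_contraction => /andP[]. Qed.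
Let L_lt1 : L < 1. Proof. by case: F_contraction => /andP[]. Qed.
Let F_bk psi : prod_bk k psi -> prod_bk k (F psi).
Proof. by case: F_contraction => _ [FS _]; exact: FS. Qed.
Let F_rho psi phi : prod_bk k psi -> prod_bk k phi ->
  rho_k k (F psi) (F phi) <= L * rho_k k psi phi.
Proof. by case: F_contraction => _ [_ Frho]; exact: Frho. Qed.

Lemma contraction_fixpoint_unique psi phi : prod_bk k psi -> prod_bk k phi ->
  F psi = psi -> F phi = phi -> psi = phi.
Proof.
move=> bpsi bphi Fpsi Fphi; have rho_ge0 := rho_k_ge0 k psi phi.
have rho_le0 : rho_k k psi phi <= 0.
  by have := F_rho bpsi bphi; rewrite Fpsi Fphi => ?; have := L_lt1; nra.
apply: funext => i; apply: funext => z; apply/eqP; rewrite -subr_eq0 -normr_le0.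
apply: le_trans (rho_k_normr_le k_gt0 i z bpsi bphi) _.
by rewrite mulr_le0_ge0 // ltW.
Qed.

Let x n := iter n F (fun _ => cst 0).

Let bk_x n : prod_bk k (x n).
Proof. by elim: n => [|n IH]; [move=> i; exact: bk_cst0 k_gt0|exact: F_bk]. Qed.

Let c := rho_k k (x 1) (x 0).

Let x_step n i z : `|x n.+1 i z - x n i z| <= c * k z * L ^+ n.
Proof.
have rho_step m : rho_k k (x m.+1) (x m) <= c * L ^+ m.
  elim: m => [|m IH]; first by rewrite expr0 mulr1.
  apply: le_trans (F_rho (bk_x m.+1) (bk_x m)) _.
  by rewrite exprS mulrCA; apply: ler_wpM2l; [exact: L_ge0|exact: IH].
apply: le_trans (rho_k_normr_le k_gt0 i z (bk_x n.+1) (bk_x n)) _.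
by rewrite mulrAC; apply: ler_wpM2r; [exact: ltW|exact: rho_step].
Qed.

Lemma contraction_fixpoint : exists2 psi, prod_bk k psi & F psi = psi.
Proof.
pose psi : 'I_N -> T -> R := fun i z => limn (fun n => x n i z).
pose B n := c * L ^+ n / (1 - L).
have psi_near n i z : `|psi i z - x n i z| <= B n * k z.
  have -> : B n * k z = c * k z * L ^+ n / (1 - L) by rewrite /B; ring.
  exact: (geometric_cauchy_lim L_ge0 L_lt1 (fun n => x_step n i z) n).
have B_ge0 n : 0 <= B n.
  by rewrite /B divr_ge0 ?mulr_ge0 ?exprn_ge0 ?rho_k_ge0 // subr_ge0 ltW.
have bk_psi : prod_bk k psi.
  move=> i; apply: (bk_le k_gt0 (c := B 0)) => [|z].
    apply: (measurable_fun_cvg (h := fun n => x n i)) => [n|z _].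
      by case: (bk_x n i).
    exact: geometric_cauchy_cvg L_ge0 L_lt1 (fun n => x_step n i z).
  by have := psi_near 0%N i z; rewrite subr0.
exists psi => //; apply: funext => i; apply: funext => z.
apply/eqP; rewrite -subr_eq0 -normr_le0.
apply: (@le0_geometric_bound _ _ (2 * c / (1 - L) * L * k z) L); first by rewrite L_ge0.
move=> n; apply: le_trans (ler_distD (x n.+1 i z) _ _) _.
have rho_n : rho_k k psi (x n) <= B n by apply: rho_k_le => // j y; exact: psi_near.
have FB : `|F psi i z - x n.+1 i z| <= L * B n * k z.
  apply: le_trans (rho_k_normr_le k_gt0 i z (F_bk bk_psi) (bk_x n.+1)) _.
  apply: ler_wpM2r; first exact: ltW.
  apply: le_trans (F_rho bk_psi (bk_x n)) _.
  by apply: ler_wpM2l; [exact: L_ge0|exact: rho_n].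
have xB := psi_near n.+1 i z; rewrite distrC in xB.
have -> : 2 * c / (1 - L) * L * k z * L ^+ n = L * B n * k z + B n.+1 * k z.
  by rewrite /B exprS; ring.
exact: lerD.
Qed.

End contraction_fixpoint.

Section bellman.
Context d (T : measurableType d) (R : realType) (N : nat).
Context (P : 'I_N -> R.-pker T ~> T) (r : 'I_N -> T -> R) (beta : R).
Context (k : T -> R) (lam c_r : R).
Hypotheses (N_gt0 : (0 < N)%N) (beta_ge0 : 0 <= beta) (lam_ge0 : 0 <= lam).
Hypotheses (k_gt0 : forall z, 0 < k z) (mk : measurable_fun setT k).
Hypothesis drift : forall i z, (\int[P i z]_y (k y)%:E <= (lam * k z)%:E)%E.
Hypotheses (mr : forall i, measurable_fun setT (r i)) (c_r_ge0 : 0 <= c_r).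
Hypothesis r_le : forall i z, `|r i z| <= c_r * k z.
Implicit Types (psi phi : 'I_N -> T -> R) (sigma : nat -> T -> 'I_N).

Let bk_r i : bk k (r i).
Proof. by apply: (bk_le k_gt0); [exact: mr|exact: r_le]. Qed.

Lemma bk_Qop psi : prod_bk k psi -> prod_bk k (Qop r beta P psi).
Proof.
move=> bpsi i; rewrite /Qop; apply: (bkD k_gt0 (bk_r i)); apply: (bkZ k_gt0).
exact: bk_Pint k_gt0 mk (drift i) _ (bk_vmax N_gt0 k_gt0 bpsi).
Qed.

Lemma Qop_dist_le psi phi c : prod_bk k psi -> prod_bk k phi -> 0 <= c ->
  (forall i z, `|psi i z - phi i z| <= c * k z) ->
  forall i z, `|Qop r beta P psi i z - Qop r beta P phi i z| <= beta * lam * c * k z.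
Proof.
move=> bpsi bphi c0 h i z; rewrite /Qop.
rewrite (_ : r i z + _ - _ = beta * (Pint (P i) (vmax psi) z - Pint (P i) (vmax phi) z));
  last by ring.
have -> : beta * lam * c * k z = beta * (c * (lam * k z)) by ring.
rewrite normrM ger0_norm //; apply: ler_wpM2l => //.
apply: (Pint_dist_le k_gt0 mk (drift i) z (bk_vmax N_gt0 k_gt0 bpsi) (bk_vmax N_gt0 k_gt0 bphi) c0).
by move=> y; apply: (vmax_dist_le N_gt0) => j; exact: h.
Qed.

Lemma Qop_contraction : beta * lam < 1 ->
  contraction_on (prod_bk k) (Qop r beta P) (rho_k k) (beta * lam).
Proof.
move=> L_lt1; split; first by rewrite mulr_ge0.
split; first exact: bk_Qop.
move=> psi phi bpsi bphi; apply: (rho_k_le k_gt0).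
  by apply: mulr_ge0; [exact: mulr_ge0|exact: rho_k_ge0].
apply: Qop_dist_le => //; first exact: rho_k_ge0.
by move=> i z; exact: rho_k_normr_le.
Qed.

Lemma expay_bound t sigma : policy sigma ->
  measurable_fun setT (expay r P sigma t) /\
  forall z, `|expay r P sigma t z| <= c_r * lam ^+ t * k z.
Proof.
elim: t sigma => [|t IH] sigma hs.
  split; first exact: (measurable_select (hs 0%N) mr).
  by move=> z; rewrite expr0 mulr1; exact: r_le.
have [mt bt] := IH _ (fun t => hs t.+1).
have bkt : bk k (expay r P (fun s => sigma s.+1) t) by exact: (bk_le k_gt0 mt bt).
split.
  exact: (measurable_select (hs 0%N) (fun i => measurable_Pint k_gt0 mk (drift i) bkt)).
move=> z /=; apply: le_trans (Pint_normr_le k_gt0 mk (drift _) z bkt _ bt) _.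
  by rewrite mulr_ge0 ?exprn_ge0.
by rewrite exprSr !mulrA.
Qed.

Lemma bk_expay t sigma : policy sigma -> bk k (expay r P sigma t).
Proof. by move=> hs; have [mt bt] := expay_bound t hs; exact: (bk_le k_gt0 mt bt). Qed.

Definition partial_payoff sigma n z := \sum_(0 <= t < n) beta ^+ t * expay r P sigma t z.

Lemma bk_partial_payoff sigma n : policy sigma -> bk k (partial_payoff sigma n).
Proof. by move=> hs; apply: (bk_sum k_gt0) => t; exact: (bkZ k_gt0 _ (bk_expay t hs)). Qed.

Lemma partial_payoffS sigma n z : policy sigma ->
  partial_payoff sigma n.+1 z =
  r (sigma 0%N z) z + beta * Pint (P (sigma 0%N z)) (partial_payoff (fun t => sigma t.+1) n) z.
Proof.
move=> hs; rewrite /partial_payoff big_nat_recl //= expr0 mul1r; congr (_ + _).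
have hs' : policy (fun t => sigma t.+1) by move=> t; exact: hs.
rewrite (Pint_sum k_gt0 mk (drift _)); last by move=> t; exact: (bkZ k_gt0 _ (bk_expay t hs')).
rewrite mulr_sumr; apply: eq_bigr => t _.
by rewrite (PintZ k_gt0 mk (drift _)) ?exprS ?mulrA //; exact: bk_expay.
Qed.

Let L := beta * lam.

Lemma partial_payoff_step sigma n z : policy sigma ->
  `|partial_payoff sigma n.+1 z - partial_payoff sigma n z| <= c_r * k z * L ^+ n.
Proof.
move=> hs; rewrite /partial_payoff big_nat_recr //= addrAC subrr add0r normrM.
rewrite ger0_norm ?exprn_ge0 //.
have [_ bt] := expay_bound n hs.
have -> : c_r * k z * L ^+ n = beta ^+ n * (c_r * lam ^+ n * k z) by rewrite /L exprMn; ring.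
by apply: ler_wpM2l; [exact: exprn_ge0|exact: bt].
Qed.

Section fixed_point.
Hypothesis L_lt1 : L < 1.
Variable psi : 'I_N -> T -> R.
Hypotheses (psi_bk : prod_bk k psi) (psi_fix : Qop r beta P psi = psi).

Let L_ge0 : 0 <= L. Proof. exact: mulr_ge0. Qed.
Let w := vmax psi.
Let bk_w : bk k w. Proof. exact: (bk_vmax N_gt0 k_gt0 psi_bk). Qed.
Let Cw := knorm k w.
Let Cw_ge0 : 0 <= Cw. Proof. exact: (knorm_ge0 k_gt0 bk_w). Qed.
Let w_le z : `|w z| <= Cw * k z. Proof. exact: (bk_normr_le k_gt0 bk_w z). Qed.

Let psiE i z : psi i z = r i z + beta * Pint (P i) w z.
Proof. by rewrite -{1}psi_fix. Qed.

Lemma vpol_near sigma z n : policy sigma ->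
  `|vpol r beta P sigma z - partial_payoff sigma n z| <= c_r * k z * L ^+ n / (1 - L).
Proof.
move=> hs; exact: (geometric_cauchy_lim L_ge0 L_lt1 (fun n => partial_payoff_step n z hs) n).
Qed.

Lemma partial_payoff_le sigma n z : policy sigma ->
  partial_payoff sigma n z <= w z + Cw * L ^+ n * k z.
Proof.
elim: n sigma z => [|n IH] sigma z hs.
  rewrite /partial_payoff big_geq // expr0 mulr1.
  by have /ler_normlP[+ _] := w_le z; lra.
have hs' : policy (fun t => sigma t.+1) by move=> t; exact: hs.
rewrite partial_payoffS //; set i := sigma 0%N z.
have := Pint_le_shift k_gt0 mk (drift i) z (bk_partial_payoff n hs') bk_w
  (mulr_ge0 Cw_ge0 (exprn_ge0 n L_ge0)) (fun y => IH _ y hs').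
move/(ler_wpM2l beta_ge0); rewrite mulrDr => PS.
have e : Cw * L ^+ n.+1 * k z = beta * (Cw * L ^+ n * (lam * k z)) by rewrite /L exprS; ring.
have := vmax_ge N_gt0 psi z i; rewrite -/w psiE => le_w.
lra.
Qed.

Lemma exists_greedy_policy : exists2 sigma, policy sigma &
  forall n z, w z - Cw * L ^+ n * k z <= partial_payoff sigma n z.
Proof.
have mA i : measurable [set z | psi i z = w z].
  have mdiff : measurable_fun setT (psi i \- w).
    by apply: measurable_funB; [case: (psi_bk i)|case: bk_w].
  have := mdiff measurableT [set 0] (measurable_set1 0); rewrite setTI.
  congr measurable; apply/seteqP; split => z /=; last by move=> ->; rewrite subrr.
  by move/eqP; rewrite subr_eq0 => /eqP.
have cover z : exists i, psi i z = w z.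
  by have [i wi] := vmax_attained N_gt0 psi z; exists i.
have [s [ms sA]] := exists_measurable_selection mA cover.
have hs : policy (fun=> s) by move=> _; exact: ms.
exists (fun=> s) => // n; elim: n => [|n IH] z.
  rewrite /partial_payoff big_geq // expr0 mulr1.
  by have /ler_normlP[_] := w_le z; lra.
rewrite partial_payoffS //=; set i := s z.
have : Pint (P i) w z <= Pint (P i) (partial_payoff (fun=> s) n) z + Cw * L ^+ n * (lam * k z).
  apply: (Pint_le_shift k_gt0 mk (drift i) z bk_w (bk_partial_payoff n hs)).
    exact: mulr_ge0 Cw_ge0 (exprn_ge0 n L_ge0).
  by move=> y; have := IH y; lra.
move/(ler_wpM2l beta_ge0); rewrite mulrDr => PS.
have e : Cw * L ^+ n.+1 * k z = beta * (Cw * L ^+ n * (lam * k z)) by rewrite /L exprS; ring.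
have := psiE i z; rewrite (sA z) => wE.
lra.
Qed.

Lemma vpol_le_vmax sigma z : policy sigma -> vpol r beta P sigma z <= w z.
Proof.
move=> hs; rewrite -subr_le0.
apply: (@le0_geometric_bound _ _ (Cw * k z + c_r * k z / (1 - L)) L); first by rewrite L_ge0.
move=> n; have /ler_normlP[_ near] := vpol_near z n hs.
have := partial_payoff_le n z hs.
have -> : (Cw * k z + c_r * k z / (1 - L)) * L ^+ n =
  Cw * L ^+ n * k z + c_r * k z * L ^+ n / (1 - L) by ring.
lra.
Qed.

Lemma vstar_vmax z : vstar r beta P z = (w z)%:E.
Proof.
apply/eqP; rewrite eq_le; apply/andP; split.
  by apply: ge_ereal_sup => _ [sigma hs <-]; rewrite lee_fin; exact: vpol_le_vmax.
have [sigma hs greedy] := exists_greedy_policy.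
apply: (@le_trans _ _ (vpol r beta P sigma z)%:E); last by apply: ereal_sup_ubound; exists sigma.
rewrite lee_fin -subr_le0.
apply: (@le0_geometric_bound _ _ (Cw * k z + c_r * k z / (1 - L)) L); first by rewrite L_ge0.
move=> n; have /ler_normlP[near _] := vpol_near z n hs.
have := greedy n z.
have -> : (Cw * k z + c_r * k z / (1 - L)) * L ^+ n =
  Cw * L ^+ n * k z + c_r * k z * L ^+ n / (1 - L) by ring.
lra.
Qed.

Lemma psistar_fixpoint : psistar r beta P = psi.
Proof.
apply: funext => i; apply: funext => z; rewrite /psistar psiE.
suff -> : (fun y => fine (vstar r beta P y)) = w by [].
by apply: funext => y; rewrite vstar_vmax.
Qed.

End fixed_point.
End bellman.

Definition drift_weight d (T : measurableType d) (R : realType) (N : nat)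
  (r : 'I_N -> T -> R) (g : T -> R) (m' d' : R) (z : T) : R :=
  m' * (\sum_(i < N) `|r i z|) + g z + d'.

Section drift_weight_bounds.
Context d (T : measurableType d) (R : realType) (N : nat).
Context (P : 'I_N -> R.-pker T ~> T) (r : 'I_N -> T -> R) (g : T -> R) (m dd m' d' : R).
Hypotheses (mr : forall i, measurable_fun setT (r i)) (mg : measurable_fun setT g).
Hypotheses (g_ge0 : forall z, 0 <= g z) (m'_gt0 : 0 < m') (d'_gt0 : 0 < d').
Hypothesis r_int_le : forall z (i j : 'I_N), (\int[P j z]_y (`|r i y|)%:E <= (g z)%:E)%E.
Hypothesis g_int_le : forall z (i : 'I_N), (\int[P i z]_y (g y)%:E <= (m * g z + dd)%:E)%E.
Hypotheses (lam_gt1 : 1 < N%:R * m' + m) (dd_le : dd / (N%:R * m' + m - 1) <= d').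
Local Notation k := (drift_weight r g m' d').

Let sum_ge0 z : 0 <= m' * \sum_(i < N) `|r i z|.
Proof. by apply: mulr_ge0; [exact: ltW|exact: sumr_ge0]. Qed.

Lemma drift_weight_gt0 z : 0 < k z.
Proof. exact: ltr_wpDl (addr_ge0 (sum_ge0 z) (g_ge0 z)) d'_gt0. Qed.

Let measurable_normr_r i : measurable_fun setT (fun z => `|r i z|).
Proof. exact: measurableT_comp (@normr_measurable R setT) (mr i). Qed.

Lemma measurable_drift_weight : measurable_fun setT k.
Proof.
apply: measurable_funD => //; apply: measurable_funD => //.
by apply: measurable_funM => //; apply: measurable_sum.
Qed.

Lemma normr_le_drift_weight i z : `|r i z| <= m'^-1 * k z.
Proof.
rewrite -(ler_pM2l m'_gt0) mulrA mulfV ?gt_eqF // mul1r /drift_weight (bigD1 i) //= mulrDr.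
rewrite -!addrA lerDl; apply: addr_ge0; first by apply: mulr_ge0; [exact: ltW|exact: sumr_ge0].
by apply: addr_ge0 => //; exact: ltW.
Qed.

Lemma integral_drift_weight i z : (\int[P i z]_y (k y)%:E =
  m'%:E * (\sum_(j < N) \int[P i z]_y (`|r j y|)%:E) + \int[P i z]_y (g y)%:E + d'%:E)%E.
Proof.
have mS : measurable_fun setT (fun y => \sum_(j < N) `|r j y|) by exact: measurable_sum.
rewrite /drift_weight; under eq_integral do rewrite !EFinD.
rewrite ge0_integralD //; last 3 first.
- by move=> y _; rewrite -EFinD lee_fin; exact: addr_ge0 (sum_ge0 y) (g_ge0 y).
- by apply: emeasurable_funD; apply/measurable_EFinP => //; exact: measurable_funM.
- by move=> y _; rewrite lee_fin; exact: ltW.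
rewrite integral_cst // prob_kernel mule1 ge0_integralD //; last 4 first.
- by move=> y _; rewrite lee_fin; exact: sum_ge0.
- by apply/measurable_EFinP; exact: measurable_funM.
- by move=> y _; rewrite lee_fin.
- exact/measurable_EFinP.
under eq_integral do rewrite EFinM.
rewrite ge0_integralZl_EFin //; last 3 first.
- by move=> y _; rewrite lee_fin; exact: sumr_ge0.
- exact/measurable_EFinP.
- exact: ltW.
under eq_integral do rewrite -sumEFin.
by rewrite ge0_integral_sum // => j; exact/measurable_EFinP.
Qed.

Lemma drift_weight_drift i z :
  (\int[P i z]_y (k y)%:E <= ((N%:R * m' + m) * k z)%:E)%E.
Proof.
rewrite integral_drift_weight.
have sum_le : (\sum_(j < N) \int[P i z]_y (`|r j y|)%:E <= (N%:R * g z)%:E)%E.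
  apply: (@le_trans _ _ (\sum_(j < N) (g z)%:E)%E).
    by apply: lee_sum => j _; exact: r_int_le.
  by rewrite sumEFin sumr_const card_ord mulr_natl.
apply: (@le_trans _ _ ((m' * (N%:R * g z))%:E + (m * g z + dd)%:E + d'%:E)%E).
  apply: leeD => //; apply: leeD => //.
  by rewrite EFinM; apply: lee_wpmul2l => //; rewrite lee_fin; exact: ltW.
rewrite -!EFinD lee_fin /drift_weight.
have dd_le' : dd <= (N%:R * m' + m - 1) * d' by rewrite mulrC -ler_pdivrMr // subr_gt0.
have := mulr_ge0 (ltW (lt_trans ltr01 lam_gt1)) (sum_ge0 z).
by have := g_ge0 z; nra.
Qed.

End drift_weight_bounds.

Theorem theorem3 (d : measure_display) (T : measurableType d) (R : realType)
  (N : nat) (P : 'I_N -> R.-pker T ~> T) (r : 'I_N -> T -> R) (beta : R)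
  (g : T -> R) (m dd m' d' : R) :
  (0 < N)%N ->
  (forall i, measurable_fun setT (r i)) ->
  0 < beta < 1 ->
  measurable_fun setT g -> (forall z, 0 <= g z) ->
  0 <= m -> 0 <= dd -> beta * m < 1 ->
  (forall z (i j : 'I_N), (\int[P j z]_y (`|r i y|)%:E <= (g z)%:E)%E) ->
  (forall z (i : 'I_N), (\int[P i z]_y (g y)%:E <= (m * g z + dd)%:E)%E) ->
  0 < m' -> 0 < d' ->
  1 < N%:R * m' + m -> beta * (N%:R * m' + m) < 1 ->
  dd / (N%:R * m' + m - 1) <= d' ->
  let k := fun z => m' * (\sum_(i < N) `|r i z|) + g z + d' in
  contraction_on (prod_bk k) (Qop r beta P) (rho_k k) (beta * (N%:R * m' + m))
  /\ ((forall z, vstar r beta P z \is a fin_num)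
      /\ prod_bk k (psistar r beta P)
      /\ Qop r beta P (psistar r beta P) = psistar r beta P
      /\ (forall psi, prod_bk k psi -> Qop r beta P psi = psi ->
            psi = psistar r beta P)).
Proof.
move=> N_gt0 mr /andP[beta_gt0 _] mg g_ge0 _ _ _ r_int_le g_int_le m'_gt0 d'_gt0.
move=> lam_gt1 L_lt1 dd_le k.
have k_gt0 : forall z, 0 < k z by apply: drift_weight_gt0.
have mk : measurable_fun setT k by apply: measurable_drift_weight.
have drift i z : (\int[P i z]_y (k y)%:E <= ((N%:R * m' + m) * k z)%:E)%E.
  exact: drift_weight_drift.
have r_le i z : `|r i z| <= m'^-1 * k z by apply: normr_le_drift_weight.
have beta_ge0 : 0 <= beta by exact: ltW.
have lam_ge0 : 0 <= N%:R * m' + m by exact: ltW (lt_trans ltr01 lam_gt1).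
have c_r_ge0 : 0 <= m'^-1 by rewrite invr_ge0 ltW.
have contr : contraction_on (prod_bk k) (Qop r beta P) (rho_k k) (beta * (N%:R * m' + m)).
  exact: Qop_contraction N_gt0 beta_ge0 lam_ge0 k_gt0 mk drift mr r_le L_lt1.
have [psi bk_psi psi_fix] := contraction_fixpoint k_gt0 contr.
have vstarE := vstar_vmax N_gt0 beta_ge0 lam_ge0 k_gt0 mk drift mr c_r_ge0 r_le L_lt1
  bk_psi psi_fix.
have psistarE := psistar_fixpoint N_gt0 beta_ge0 lam_ge0 k_gt0 mk drift mr c_r_ge0 r_le
  L_lt1 bk_psi psi_fix.
split => //; split; first by move=> z; rewrite vstarE.
rewrite psistarE; split => //; split => // phi bk_phi phi_fix.
exact: (contraction_fixpoint_unique k_gt0 contr bk_phi bk_psi phi_fix psi_fix).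
Qed.
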